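(* Let $\alpha\in(0,1/2)$. There exist constants $c,C>0$ depending only on $\alpha$ such that for every irreducible discrete-time Markov chain on a finite state space, \[ c\, t_{\mathrm{mov}}(\alpha)\le t_{\mathrm{mix}}\le C\, t_{\mathrm{mov}}(\alpha). \]
   Context: Let $(X_t)_{t\ge0}$ be an irreducible discrete-time Markov chain on a finite state space $\Omega$ with transition matrix $P$ and stationary distribution $\pi$; write $P^t(x,y)=\mathbb{P}_x(X_t=y)$. Let $d(t)=\max_x\|P^t(x,\cdot)-\pi\|$, where $\|\mu-\nu\|$ is the total variation distance, and $t_{\mathrm{mix}}(\epsilon)=\min\{t\ge0: d(t)\le\epsilon\}$, $t_{\mathrm{mix}}=t_{\mathrm{mix}}(1/4)$. For $\alpha\in(0,1)$ let $\mathcal{A}(\alpha)$ be the set of sequences $A=(A_t)_{t\ge0}$ of subsets of $\Omega$ with $\pi(A_t)\ge\alpha$ for all $t$; for such $A$ let $\tau_A=\inf\{t\ge0: X_t\in A_t\}$, and define $t_{\mathrm{mov}}(\alpha)=\sup_{x\in\Omega,\,A\in\mathcal{A}(\alpha)}\mathbb{E}_x[\tau_A]$. *)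

From HB Require Import structures.
From mathcomp Require Import all_boot all_order all_algebra.
From mathcomp Require Import all_classical all_reals all_analysis.
Set Implicit Arguments. Unset Strict Implicit. Unset Printing Implicit Defensive.
Import Order.TTheory GRing.Theory Num.Theory.
Local Open Scope ring_scope.

Section MC.
Variables (R : realType) (S : finType).

Definition stochastic (P : S -> S -> R) : Prop :=
  (forall x y, 0 <= P x y) /\ (forall x, \sum_(y : S) P x y = 1).

Fixpoint Pow (P : S -> S -> R) (t : nat) : S -> S -> R :=
  match t with
  | 0 => fun x y => (x == y)%:R
  | t'.+1 => fun x y => \sum_(z : S) Pow P t' x z * P z y
  end.

Definition irreducible (P : S -> S -> R) : Prop :=
  forall x y, exists t, 0 < Pow P t x y.

Definition stationary (P : S -> S -> R) (pi : S -> R) : Prop :=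
  (forall x, 0 <= pi x) /\ (\sum_(x : S) pi x = 1) /\
  (forall y, \sum_(x : S) pi x * P x y = pi y).

Definition tv (mu nu : S -> R) : R := 2^-1 * \sum_(y : S) `|mu y - nu y|.

Definition dist_t (P : S -> S -> R) (pi : S -> R) (t : nat) : R :=
  \big[Num.max/0]_(x : S) tv (Pow P t x) pi.

(* t_mix(eps) = min { t >= 0 : d(t) <= eps }  (= +oo if the set is empty) *)
Definition tmix_eps (P : S -> S -> R) (pi : S -> R) (eps : R) : \bar R :=
  ereal_inf [set (t%:R)%:E | t in [set t : nat | dist_t P pi t <= eps]].

Definition tmix (P : S -> S -> R) (pi : S -> R) : \bar R := tmix_eps P pi (4^-1).

Definition mass (pi : S -> R) (A : {set S}) : R := \sum_(y in A) pi y.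

(* r t y = P_x( X_t = y, X_s \notin A_s for all s < t ) *)
Fixpoint avoid (P : S -> S -> R) (x : S) (A : nat -> {set S}) (t : nat) : S -> R :=
  match t with
  | 0 => fun y => (y == x)%:R
  | t'.+1 => fun y => \sum_(z : S) (z \notin A t')%:R * avoid P x A t' z * P z y
  end.

(* P_x( tau_A = t ), tau_A = inf { t >= 0 : X_t \in A_t } *)
Definition hit_prob (P : S -> S -> R) (x : S) (A : nat -> {set S}) (t : nat) : R :=
  \sum_(y in A t) avoid P x A t y.

(* P_x( tau_A = +oo ) = 1 - sum_t P_x(tau_A = t) *)
Definition hit_inf_prob (P : S -> S -> R) (x : S) (A : nat -> {set S}) : \bar R :=
  (1%:E - \sum_(0 <= t <oo) (hit_prob P x A t)%:E)%E.

(* E_x[tau_A] = sum_t t P_x(tau_A = t) + (+oo) * P_x(tau_A = +oo) *)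
Definition exp_hit (P : S -> S -> R) (x : S) (A : nat -> {set S}) : \bar R :=
  (\sum_(0 <= t <oo) (t%:R * hit_prob P x A t)%:E
   + (if (0 < hit_inf_prob P x A)%E then +oo else 0))%E.

Definition tmov (P : S -> S -> R) (pi : S -> R) (alpha : R) : \bar R :=
  ereal_sup [set v | exists (x : S) (A : nat -> {set S}),
     (forall t, alpha <= mass pi (A t)) /\ v = exp_hit P x A].

End MC.

From HB Require Import structures.
From mathcomp Require Import all_boot all_order all_algebra.
From mathcomp Require Import all_classical all_reals all_analysis.
From mathcomp Require Import ring lra zify.
Import Order.TTheory GRing.Theory Num.Theory.
Local Open Scope ring_scope.
Set Implicit Arguments. Unset Strict Implicit. Unset Printing Implicit Defensive.

(* If [dist_t P pi L <= alpha / 2], then at every time [n + L] the chain is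
   [alpha / 2]-close to [pi], so during each block of [L.+1] steps it enters a
   target of [pi]-mass at least [alpha] with probability at least [alpha / 2], and
   the expected hitting time is at most [2 (L + 1) / alpha].  Since [dbar] is
   submultiplicative, [dist_t] drops below [alpha / 2] after a constant multiple of
   [t_mix] steps.
   Conversely, if [dist_t P pi t > gam alpha], take [x] with
   [tv (P^t(x, .)) pi > gam alpha] and [B := {P^t(x, .) < pi}].  The level sets
   [{y | P_y(X_(t - s) in B) >= P_x(X_t in B) + eta alpha / 2}] have mass at least
   [alpha], and optional stopping of the martingale [P_(X_s)(X_(t - s) in B)] shows
   that the chain from [x] avoids them up to time [t] with probability at least
   [eta alpha / 2]; hence [t_mov >= (t + 1) eta alpha / 2].  So [dist_t] is below
   [gam alpha < 1/2] after [O(t_mov)] steps, and submultiplicativity again bounds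
   [t_mix]. *)

Definition Pow_set (R : realType) (S : finType) (P : S -> S -> R) (n : nat)
  (y : S) (B : {set S}) : R := \sum_(z in B) Pow P n y z.

Section TransitionPowers.
Variables (R : realType) (S : finType) (P : S -> S -> R).
Hypothesis HP : stochastic P.

Lemma Pow_ge0 t x y : 0 <= Pow P t x y.
Proof.
elim: t x y => [|t IH] x y /=; first by rewrite ler0n.
by apply: sumr_ge0 => z _; rewrite mulr_ge0 //; exact: HP.1.
Qed.

Lemma Pow_sum1 t x : \sum_y Pow P t x y = 1.
Proof.
elim: t x => [|t IH] x /=.
  by rewrite (bigD1 x) //= eqxx big1 ?addr0 // => y /negbTE; rewrite eq_sym => ->.
rewrite exchange_big /= -(IH x); apply: eq_bigr => z _.
by rewrite -mulr_sumr HP.2 mulr1.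
Qed.

Lemma PowD s t x y : Pow P (s + t) x y = \sum_z Pow P s x z * Pow P t z y.
Proof.
elim: t y => [|t IH] y /=.
  rewrite addn0 (bigD1 y) //= eqxx mulr1 big1 ?addr0 // => z /negbTE.
  by rewrite eq_sym => ->; rewrite mulr0.
rewrite addnS /=; under eq_bigr do rewrite IH mulr_suml.
rewrite exchange_big /=; apply: eq_bigr => z _.
by rewrite mulr_sumr; apply: eq_bigr => w _; rewrite mulrA.
Qed.

Lemma PowSl t x y : Pow P t.+1 x y = \sum_z P x z * Pow P t z y.
Proof.
rewrite -add1n PowD; apply: eq_bigr => z _; congr (_ * _).
rewrite /= (bigD1 x) //= eqxx mul1r big1 ?addr0 // => w /negbTE.
by rewrite eq_sym => ->; rewrite mul0r.
Qed.

Lemma stationary_Pow (pi : S -> R) : stationary P pi ->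
  forall t y, \sum_x pi x * Pow P t x y = pi y.
Proof.
move=> [_ [_ piP]] t; elim: t => [|t IH] y /=.
  by rewrite (bigD1 y) //= eqxx mulr1 big1 ?addr0 // => z /negbTE ->; rewrite mulr0.
rewrite -piP; under eq_bigr do rewrite mulr_sumr.
rewrite exchange_big /=; apply: eq_bigr => z _.
by rewrite -IH mulr_suml; apply: eq_bigr => w _; rewrite mulrA.
Qed.

Lemma Pow_set_ge0 n y B : 0 <= Pow_set P n y B.
Proof. by apply: sumr_ge0 => z _; apply: Pow_ge0. Qed.

Lemma Pow_setC n y B : Pow_set P n y B = 1 - Pow_set P n y (~: B).
Proof.
have := Pow_sum1 n y; rewrite (bigID (mem B)) /= /Pow_set => <-.
by under [X in _ - X]eq_bigl do rewrite inE; rewrite addrK.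
Qed.

Lemma Pow_set_le1 n y B : Pow_set P n y B <= 1.
Proof. by rewrite Pow_setC lerBlDr lerDl Pow_set_ge0. Qed.

Lemma Pow_setSl n y B : Pow_set P n.+1 y B = \sum_z P y z * Pow_set P n z B.
Proof.
rewrite /Pow_set; under eq_bigr do rewrite PowSl.
by rewrite exchange_big; apply: eq_bigr => z _; rewrite mulr_sumr.
Qed.

Lemma stationary_Pow_set (pi : S -> R) : stationary P pi ->
  forall n B, \sum_y pi y * Pow_set P n y B = mass pi B.
Proof.
move=> Hpi n B; rewrite /Pow_set /mass; under eq_bigr do rewrite mulr_sumr.
by rewrite exchange_big; apply: eq_bigr => z _; apply: stationary_Pow.
Qed.

End TransitionPowers.

Section TotalVariation.
Variables (R : realType) (S : finType).
Implicit Types (mu nu : S -> R).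

Lemma tv_sym mu nu : tv mu nu = tv nu mu.
Proof. by rewrite /tv; congr (_ * _); apply: eq_bigr => y _; rewrite distrC. Qed.

Lemma tv_triangle mu nu rho : tv mu rho <= tv mu nu + tv nu rho.
Proof.
rewrite /tv -mulrDr ler_wpM2l ?invr_ge0 ?ler0n // -big_split /=.
by apply: ler_sum => y _; rewrite (le_trans _ (ler_normD _ _)) // addrA subrK.
Qed.

Lemma tv_le1 mu nu : (forall y, 0 <= mu y) -> (forall y, 0 <= nu y) ->
  \sum_y mu y = 1 -> \sum_y nu y = 1 -> tv mu nu <= 1.
Proof.
move=> mu0 nu0 mu1 nu1.
have : \sum_y `|mu y - nu y| <= \sum_y mu y + \sum_y nu y.
  rewrite -big_split; apply: ler_sum => y _.
  by rewrite (le_trans (ler_normB _ _)) // !ger0_norm.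
rewrite /tv mu1 nu1; lra.
Qed.

Lemma funrposBnegE (u : S -> R) y : u^\+ y - u^\- y = u y.
Proof. exact: (congr1 (fun f => f y) (funrposBneg u)). Qed.

Lemma sum_funrpos_neg (u : S -> R) : \sum_y u y = 0 ->
  \sum_y u^\+ y = \sum_y u^\- y.
Proof.
move=> u0; apply/eqP; rewrite -subr_eq0 -sumrB -[X in _ == X]u0.
by apply/eqP/eq_bigr => y _; rewrite funrposBnegE.
Qed.

Lemma tv_sum_funrpos mu nu : \sum_y mu y = 1 -> \sum_y nu y = 1 ->
  tv mu nu = \sum_y (mu \- nu)^\+ y.
Proof.
move=> mu1 nu1; set w := mu \- nu.
have posE : \sum_y w^\+ y = \sum_y w^\- y.
  by apply: sum_funrpos_neg; rewrite sumrB mu1 nu1 subrr.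
have normD : \sum_y `|w y| = \sum_y w^\+ y + \sum_y w^\- y.
  rewrite -big_split; apply: eq_bigr => y _.
  exact: (esym (congr1 (fun f => f y) (funrposDneg w))).
rewrite /tv normD -posE; lra.
Qed.

Lemma tv_ge_sum_set mu nu (A : {set S}) : \sum_y mu y = 1 -> \sum_y nu y = 1 ->
  \sum_(y in A) (mu y - nu y) <= tv mu nu.
Proof.
move=> mu1 nu1; rewrite tv_sum_funrpos //.
apply: (@le_trans _ _ (\sum_(y in A) (mu \- nu)^\+ y)).
  by apply: ler_sum => y _; rewrite /funrpos le_max lexx.
rewrite [X in _ <= X](bigID (mem A)) /= lerDl; apply: sumr_ge0 => y _.
exact: funrpos_ge0.
Qed.

Lemma tv_sum_gt mu nu : \sum_y mu y = 1 -> \sum_y nu y = 1 ->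
  tv mu nu = \sum_(y in [set y | nu y < mu y]) (mu y - nu y).
Proof.
move=> mu1 nu1; rewrite tv_sum_funrpos // (bigID (mem [set y | nu y < mu y])) /=.
rewrite [X in _ + X]big1 ?addr0; last first.
  by move=> y; rewrite inE -leNgt -subr_le0 => h; rewrite /funrpos max_r.
by apply: eq_bigr => y; rewrite inE -subr_gt0 => h; rewrite /funrpos max_l // ltW.
Qed.

Lemma tv_convex mu (I : finType) (c : I -> R) (nu : I -> S -> R) :
  (forall i, 0 <= c i) -> \sum_i c i = 1 ->
  tv mu (fun y => \sum_i c i * nu i y) <= \sum_i c i * tv mu (nu i).
Proof.
move=> c0 c1; rewrite /tv.
under [X in _ <= X]eq_bigr do rewrite mulrCA.
rewrite -mulr_sumr ler_wpM2l ?invr_ge0 ?ler0n //.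
under [X in _ <= X]eq_bigr do rewrite mulr_sumr.
rewrite exchange_big /=; apply: ler_sum => y _.
have -> : mu y - \sum_i c i * nu i y = \sum_i c i * (mu y - nu i y).
  by symmetry; under eq_bigr do rewrite mulrBr; rewrite sumrB -mulr_suml c1 mul1r.
apply: (le_trans (ler_norm_sum _ _ _)); apply: ler_sum => i _.
by rewrite normrM ger0_norm.
Qed.

End TotalVariation.

Section KernelContraction.
Variables (R : realType) (S : finType) (mu nu : S -> R) (Q : S -> S -> R).
Hypotheses (mu1 : \sum_y mu y = 1) (nu1 : \sum_y nu y = 1).

Let w := mu \- nu.
Let d := tv mu nu.
Let muQ z := \sum_y mu y * Q y z.
Let nuQ z := \sum_y nu y * Q y z.

Let d_ge0 : 0 <= d.
Proof.
by rewrite /d tv_sum_funrpos //; apply: sumr_ge0 => y _; exact: funrpos_ge0.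
Qed.

Let sum_funrpos : \sum_y w^\+ y = d.
Proof. by rewrite /d tv_sum_funrpos. Qed.

Let sum_funrneg : \sum_y w^\- y = d.
Proof. by rewrite -sum_funrpos sum_funrpos_neg // sumrB mu1 nu1 subrr. Qed.

Let muQ_sub_nuQ z : muQ z - nuQ z = \sum_y w^\+ y * Q y z - \sum_y w^\- y * Q y z.
Proof. by rewrite -!sumrB; apply: eq_bigr => y _; rewrite -!mulrBl funrposBnegE. Qed.

(* Couple the excess mass [w^\+] of [mu] with the excess mass [w^\-] of [nu]. *)
Let coupling z : d * (muQ z - nuQ z) =
  \sum_y \sum_y' w^\+ y * w^\- y' * (Q y z - Q y' z).
Proof.
have -> : \sum_y \sum_y' w^\+ y * w^\- y' * (Q y z - Q y' z) =
    \sum_y \sum_y' w^\+ y * w^\- y' * Q y z - \sum_y \sum_y' w^\+ y * w^\- y' * Q y' z.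
  rewrite -sumrB; apply: eq_bigr => y _; rewrite -sumrB.
  by apply: eq_bigr => y' _; rewrite mulrBr.
rewrite muQ_sub_nuQ mulrBr; congr (_ - _).
  rewrite mulr_sumr; apply: eq_bigr => y _.
  by rewrite -sum_funrneg mulr_suml; apply: eq_bigr => y' _; ring.
rewrite exchange_big mulr_sumr; apply: eq_bigr => y' _ /=.
by rewrite -sum_funrpos mulr_suml; apply: eq_bigr => y _; ring.
Qed.

Lemma tv_kernel_contract (D : R) : (forall y y', tv (Q y) (Q y') <= D) ->
  tv muQ nuQ <= tv mu nu * D.
Proof.
move=> QD; rewrite -/d.
have [dp|] := ltP 0 d; last first.
  rewrite le_eqVlt ltNge d_ge0 orbF => /eqP d_eq0.
  have wp0 := psumr_eq0P (fun y _ => funrpos_ge0 w y) (etrans sum_funrpos d_eq0).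
  have wn0 := psumr_eq0P (fun y _ => funrneg_ge0 w y) (etrans sum_funrneg d_eq0).
  rewrite d_eq0 mul0r /tv big1 ?mulr0 // => z _.
  by rewrite muQ_sub_nuQ !big1 ?subrr ?normr0 // => y _; rewrite ?wp0 ?wn0 ?mul0r.
rewrite -(ler_pM2l dp) /tv mulrCA.
suff : d * (\sum_z `|muQ z - nuQ z|) <= d * (d * (2 * D)) by lra.
rewrite mulr_sumr.
apply: (@le_trans _ _ (\sum_z \sum_y \sum_y' w^\+ y * w^\- y' * `|Q y z - Q y' z|)).
  apply: ler_sum => z _; rewrite -[X in X * _](ger0_norm d_ge0) -normrM coupling.
  apply: (le_trans (ler_norm_sum _ _ _)); apply: ler_sum => y _.
  apply: (le_trans (ler_norm_sum _ _ _)); apply: ler_sum => y' _.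
  by rewrite normrM ger0_norm // mulr_ge0 ?funrpos_ge0 ?funrneg_ge0.
rewrite exchange_big /=.
apply: (@le_trans _ _ (\sum_y \sum_y' w^\+ y * w^\- y' * (2 * D))).
  apply: ler_sum => y _; rewrite exchange_big /=; apply: ler_sum => y' _.
  rewrite -mulr_sumr ler_wpM2l ?mulr_ge0 ?funrpos_ge0 ?funrneg_ge0 //.
  by have := QD y y'; rewrite /tv; lra.
rewrite -{1}sum_funrpos mulr_suml; apply: ler_sum => y _.
rewrite -sum_funrneg mulr_suml mulr_sumr; apply: ler_sum => y' _.
by rewrite mulrA.
Qed.

End KernelContraction.

Definition dbar (R : realType) (S : finType) (P : S -> S -> R) (t : nat) : R :=
  \big[Num.max/0]_(x : S) \big[Num.max/0]_(y : S) tv (Pow P t x) (Pow P t y).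

Section Distances.
Variables (R : realType) (S : finType) (P : S -> S -> R) (pi : S -> R).
Hypotheses (HP : stochastic P) (Hpi : stationary P pi).

Lemma le_dbar t x y : tv (Pow P t x) (Pow P t y) <= dbar P t.
Proof.
apply: le_trans (le_bigmax _ _ x).
exact: (le_bigmax _ (fun y => tv (Pow P t x) (Pow P t y)) y).
Qed.

Lemma dbar_ge0 t : 0 <= dbar P t.
Proof. exact: bigmax_ge_id. Qed.

Lemma dbar_le1 t : dbar P t <= 1.
Proof.
apply: bigmax_le => // x _; apply: bigmax_le => // y _.
by apply: tv_le1 => *; rewrite ?Pow_sum1 ?Pow_ge0.
Qed.

Lemma dist_ge0 t : 0 <= dist_t P pi t.
Proof. exact: bigmax_ge_id. Qed.

Lemma le_dist t x : tv (Pow P t x) pi <= dist_t P pi t.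
Proof. exact: (le_bigmax _ (fun x => tv (Pow P t x) pi) x). Qed.

Lemma dist_le_dbar t : dist_t P pi t <= dbar P t.
Proof.
have [pi0 [pi1 _]] := Hpi.
apply: bigmax_le; first exact: dbar_ge0.
move=> x _; rewrite -(funext (stationary_Pow Hpi t)).
apply: (le_trans (tv_convex _ _ pi0 pi1)).
apply: (@le_trans _ _ (\sum_z pi z * dbar P t)).
  by apply: ler_sum => z _; rewrite ler_wpM2l ?le_dbar.
by rewrite -mulr_suml pi1 mul1r.
Qed.

Lemma dbar_le_2dist t : dbar P t <= 2 * dist_t P pi t.
Proof.
have d0 := dist_ge0 t.
apply: bigmax_le => [|x _]; first by rewrite mulr_ge0.
apply: bigmax_le => [|y _]; first by rewrite mulr_ge0.
apply: (le_trans (tv_triangle _ pi _)); rewrite [tv pi _]tv_sym.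
have := le_dist t x; have := le_dist t y; lra.
Qed.

Lemma dbar_submul s t : dbar P (s + t) <= dbar P s * dbar P t.
Proof.
have dst := mulr_ge0 (dbar_ge0 s) (dbar_ge0 t).
apply: bigmax_le => // x _; apply: bigmax_le => // y _.
have PowDE z : Pow P (s + t) z = fun w => \sum_u Pow P s z u * Pow P t u w.
  by apply/funext => w; rewrite PowD.
rewrite !PowDE.
apply: (le_trans (tv_kernel_contract (Pow_sum1 HP s x) (Pow_sum1 HP s y) (le_dbar t))).
by rewrite ler_wpM2r ?dbar_ge0 ?le_dbar.
Qed.

Lemma dbar_mul_le_exp k t : dbar P (k * t) <= dbar P t ^+ k.
Proof.
elim: k => [|k IH]; first by rewrite mul0n expr0 dbar_le1.
rewrite mulSn addnC exprSr; apply: (le_trans (dbar_submul _ _)).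
by rewrite ler_wpM2r ?dbar_ge0.
Qed.

Lemma dist_mul_le_exp k t : dist_t P pi (k * t) <= (2 * dist_t P pi t) ^+ k.
Proof.
apply: (le_trans (dist_le_dbar _)); apply: (le_trans (dbar_mul_le_exp _ _)).
by rewrite lerXn2r ?nnegrE ?dbar_ge0 ?mulr_ge0 ?dist_ge0 ?dbar_le_2dist.
Qed.

(* [dbar 0 <= dbar 0 ^+ 2] by submultiplicativity, while [dbar 0 <= 2 * dist_t P pi 0 <= 1/2]. *)
Lemma dist0_eq0 : dist_t P pi 0 <= 4^-1 -> dist_t P pi 0 = 0.
Proof.
move=> d0; have := dbar_submul 0 0; rewrite addn0 => dbar_sq.
have := dbar_le_2dist 0; have := dist_le_dbar 0; have := dist_ge0 0.
have := dbar_ge0 0; nra.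
Qed.

End Distances.

(* [surv P x A n] is the probability that the chain started at [x] has not hit
   the moving target [A] before time [n], i.e. [P_x(tau_A >= n)]. *)
Definition surv (R : realType) (S : finType) (P : S -> S -> R) (x : S)
  (A : nat -> {set S}) (n : nat) : R := \sum_y avoid P x A n y.

Section Survival.
Variables (R : realType) (S : finType) (P : S -> S -> R).
Hypothesis HP : stochastic P.
Variables (x : S) (A : nat -> {set S}).
Local Notation surv := (surv P x A).
Local Notation hit := (hit_prob P x A).
Local Notation avoid := (avoid P x A).

Lemma avoid_ge0 n y : 0 <= avoid n y.
Proof.
elim: n y => [|n IH] y /=; first by rewrite ler0n.
by apply: sumr_ge0 => z _; rewrite !mulr_ge0 ?ler0n //; exact: HP.1.
Qed.

Lemma hit_prob_ge0 n : 0 <= hit n.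
Proof. by apply: sumr_ge0 => y _; apply: avoid_ge0. Qed.

Lemma surv_ge0 n : 0 <= surv n.
Proof. by apply: sumr_ge0 => y _; apply: avoid_ge0. Qed.

Lemma surv0 : surv 0 = 1.
Proof. by rewrite /surv /= (bigD1 x) //= eqxx big1 ?addr0 // => y /negbTE ->. Qed.

Lemma survS_notin n : surv n.+1 = \sum_(y | y \notin A n) avoid n y.
Proof.
rewrite /surv /= exchange_big /= [RHS]big_mkcond /=; apply: eq_bigr => z _.
by rewrite -mulr_sumr HP.2 mulr1; case: (z \notin A n); rewrite ?mul1r ?mul0r.
Qed.

Lemma survS n : surv n.+1 = surv n - hit n.
Proof. by rewrite survS_notin /surv /hit_prob [in RHS](bigID (mem (A n))) /= addrC addrK. Qed.

Lemma surv_mono m n : (m <= n)%N -> surv n <= surv m.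
Proof.
move=> /subnK <-; elim: (n - m)%N => [|k IH]; first by rewrite add0n.
by rewrite addSn survS (le_trans _ IH) // lerBlDr lerDl hit_prob_ge0.
Qed.

Lemma surv_le1 n : surv n <= 1.
Proof. by rewrite -surv0 surv_mono. Qed.

Lemma sum_hit_prob N : \sum_(r < N) hit r = 1 - surv N.
Proof.
elim: N => [|N IH]; first by rewrite big_ord0 surv0 subrr.
by rewrite big_ord_recr /= IH survS; ring.
Qed.

Lemma sum_time_hit_prob N :
  \sum_(r < N) r%:R * hit r = \sum_(r < N) surv r.+1 - N%:R * surv N.
Proof.
apply/eqP; rewrite eq_sym subr_eq; apply/eqP.
elim: N => [|N IH]; first by rewrite !big_ord0 mul0r addr0.
by rewrite !big_ord_recr /= IH survS -natr1; ring.
Qed.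

Lemma surv_tail_le_sum N : N%:R * surv N <= \sum_(r < N) surv r.+1.
Proof.
have -> : N%:R * surv N = \sum_(r < N) surv N.
  by rewrite sumr_const card_ord mulr_natl.
by apply: ler_sum => r _; apply: surv_mono.
Qed.

Lemma avoid_le_Pow n j y : avoid (n + j) y <= \sum_z avoid n z * Pow P j z y.
Proof.
elim: j y => [|j IH] y.
  rewrite addn0 /= (bigD1 y) //= eqxx mulr1 big1 ?addr0 // => z /negbTE.
  by rewrite eq_sym => ->; rewrite mulr0.
rewrite addnS /=.
apply: (@le_trans _ _ (\sum_u (\sum_z avoid n z * Pow P j z u) * P u y)).
  apply: ler_sum => u _; apply: ler_wpM2r; first exact: HP.1.
  apply: le_trans (IH u).
  by case: (u \notin A (n + j)); rewrite ?mul1r ?mul0r ?avoid_ge0.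
under [X in X <= _]eq_bigr do rewrite mulr_suml.
rewrite exchange_big /=; apply: ler_sum => z _; rewrite mulr_sumr.
by apply: ler_sum => u _; rewrite mulrA.
Qed.

Lemma surv_step n L :
  surv (n + L).+1 <= \sum_z avoid n z * (1 - Pow_set P L z (A (n + L))).
Proof.
rewrite survS_notin.
apply: (@le_trans _ _ (\sum_(y | y \notin A (n + L)) \sum_z avoid n z * Pow P L z y)).
  by apply: ler_sum => y _; apply: avoid_le_Pow.
rewrite exchange_big /=; apply: ler_sum => z _.
rewrite -mulr_sumr ler_wpM2l ?avoid_ge0 // (Pow_setC HP) subKr.
by rewrite le_eqVlt /Pow_set (eq_bigl _ _ (fun y => finset.in_setC y _)) eqxx.
Qed.

End Survival.

Section ExpectedHittingTime.
Variables (R : realType) (S : finType) (P : S -> S -> R).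
Hypothesis HP : stochastic P.
Variables (x : S) (A : nat -> {set S}).
Local Notation surv := (surv P x A).
Local Notation hit := (hit_prob P x A).

Lemma hit_series_ge N : ((1 - surv N)%:E <= \sum_(0 <= t <oo) (hit t)%:E)%E.
Proof.
have := @nneseries_lim_ge R (fun t => (hit t)%:E) xpredT 0 N.
rewrite big_mkord sumEFin sum_hit_prob //; apply => n _ _.
by rewrite lee_fin hit_prob_ge0.
Qed.

Lemma hit_series_le m : (forall N, m <= surv N) ->
  (\sum_(0 <= t <oo) (hit t)%:E <= (1 - m)%:E)%E.
Proof.
move=> surv_ge; apply: lime_le.
  by apply: is_cvg_nneseries => n _ _; rewrite lee_fin hit_prob_ge0.
apply: nearW => N /=; rewrite big_mkord sumEFin sum_hit_prob // lee_fin.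
by have := surv_ge N; lra.
Qed.

Lemma time_hit_series_ge N :
  ((\sum_(r < N) surv r.+1 - N%:R * surv N)%:E <=
    \sum_(0 <= t <oo) (t%:R * hit t)%:E)%E.
Proof.
have := @nneseries_lim_ge R (fun t => (t%:R * hit t)%:E) xpredT 0 N.
rewrite big_mkord sumEFin -sum_time_hit_prob //; apply => n _ _.
by rewrite lee_fin mulr_ge0 ?hit_prob_ge0.
Qed.

Lemma exp_hit_le (B : R) : (forall N, \sum_(r < N) surv r.+1 <= B) ->
  (exp_hit P x A <= B%:E)%E.
Proof.
move=> sum_le; have B0 : 0 <= B by have := sum_le 0%N; rewrite big_ord0.
have surv_small m : 0 < m -> exists N, surv N <= m.
  move=> m0; exists (Num.truncn (B / m)).+1.
  have := truncnS_gt (B / m); rewrite ltr_pdivrMr // => lt_Bm.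
  have := le_trans (surv_tail_le_sum HP x A _) (sum_le (Num.truncn (B / m)).+1).
  have := surv_ge0 HP x A (Num.truncn (B / m)).+1; nra.
have hit_inf_le0 : (0 < hit_inf_prob P x A)%E = false.
  apply/negbTE; rewrite -leNgt /hit_inf_prob lee_subel_addr // add0e.
  apply/lee_subgt0Pr => e e0; have [N surv_le] := surv_small e e0.
  by apply: le_trans (hit_series_ge N); rewrite -EFinB lee_fin; lra.
rewrite /exp_hit ifF // adde0; apply: lime_le.
  by apply: is_cvg_nneseries => n _ _; rewrite lee_fin mulr_ge0 ?hit_prob_ge0.
apply: nearW => N /=; rewrite big_mkord sumEFin sum_time_hit_prob // lee_fin.
by have := sum_le N; have := mulr_ge0 (ler0n R N) (surv_ge0 HP x A N); lra.
Qed.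

Lemma exp_hit_pinfty m : 0 < m -> (forall N, m <= surv N) -> exp_hit P x A = +oo%E.
Proof.
move=> m0 surv_ge; rewrite /exp_hit ifT ?addey //.
  rewrite gt_eqF // (lt_le_trans _ (time_hit_series_ge 0)) //.
  by rewrite big_ord0 mul0r subr0 ltNyr.
rewrite /hit_inf_prob (lt_le_trans _ (_ : m%:E <= _)%E) ?lte_fin //.
rewrite lee_suber_addl // (le_trans (leeD2r _ (hit_series_le surv_ge))) //.
by rewrite -EFinD lee_fin; lra.
Qed.

Lemma time_hit_partial_ge t M : (t <= M)%N ->
  t%:R * (surv t - surv M) <= \sum_(r < M) surv r.+1 - M%:R * surv M.
Proof.
move=> tM.
have -> : \sum_(r < M) surv r.+1 - M%:R * surv M = \sum_(0 <= r < M) (surv r.+1 - surv M).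
  by rewrite big_mkord sumrB sumr_const card_ord mulr_natl.
rewrite (@big_cat_nat _ _ _ t 0 M) //= -[X in X <= _]addr0 lerD //.
  have -> : t%:R * (surv t - surv M) = \sum_(0 <= r < t) (surv t - surv M).
    by rewrite sumr_const_nat subn0 mulr_natl.
  by apply: ler_sum_nat => r /andP[_ rt]; rewrite lerD2r surv_mono.
rewrite big_nat_cond; apply: sumr_ge0 => r /andP[/andP[_ rM] _].
by rewrite subr_ge0 surv_mono.
Qed.

Lemma exp_hit_ge t : ((t%:R * surv t)%:E <= exp_hit P x A)%E.
Proof.
case: (pselect (forall m, 0 < m -> exists N, surv N <= m)) => [surv_small|]; last first.
  move=> /existsNP[m /not_implyP[m0 /forallNP surv_gt]].
  rewrite (exp_hit_pinfty m0) ?leey // => N.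
  by have := surv_gt N; rewrite leNgt => /negP; rewrite negbK => /ltW.
apply: le_trans (_ : \sum_(0 <= t <oo) (t%:R * hit t)%:E <= _)%E; last first.
  by rewrite /exp_hit leeDl //; case: ifP.
have [-> | tpos] := eqVneq t 0%N.
  by rewrite mul0r (le_trans _ (time_hit_series_ge 0)) // big_ord0 mul0r subr0.
apply/lee_subgt0Pr => e e0.
have tpos' : 0 < t%:R :> R by rewrite ltr0n lt0n.
have [N surv_le] := surv_small (e / t%:R) (divr_gt0 e0 tpos').
apply: (le_trans _ (time_hit_series_ge (maxn N t))); rewrite -EFinB lee_fin.
apply: le_trans (time_hit_partial_ge (leq_maxr N t)).
have : surv (maxn N t) <= e / t%:R by apply: le_trans surv_le; apply: surv_mono => //; exact: leq_maxl.
by rewrite ler_pdivlMr // => ?; nra.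
Qed.

End ExpectedHittingTime.

Lemma sum_geometric_decay (R : realType) (a : nat -> R) (K : nat) (g : R) :
  (forall n, 0 <= a n) -> (forall n, a n <= 1) -> 0 <= g ->
  (forall n, a (n + K)%N <= g * a n) ->
  forall N, (1 - g) * \sum_(r < N) a r <= K%:R.
Proof.
move=> a0 a1 g0 aK.
have telescope N : \sum_(r < N) a r - g * \sum_(r < N - K) a r <= K%:R.
  elim: N => [|N IH]; first by rewrite sub0n !big_ord0 mulr0 subr0.
  have [NK | KN] := ltnP N K.
    rewrite (_ : N.+1 - K = 0)%N ?big_ord0 ?mulr0 ?subr0; last by apply/eqP; rewrite subn_eq0.
    apply: (@le_trans _ _ (\sum_(r < N.+1) (1 : R))); first by apply: ler_sum => r _.
    by rewrite sumr_const card_ord ler_nat.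
  rewrite subSn // !big_ord_recr /=.
  have := aK (N - K)%N; rewrite subnK // => aNK; nra.
move=> N; apply: le_trans (telescope N).
rewrite mulrBl mul1r lerD2l lerN2 ler_wpM2l // -!(big_mkord xpredT a).
by rewrite (@big_cat_nat _ _ _ (N - K) 0 N) ?leq_subr //= lerDl sumr_ge0.
Qed.

Section HittingUpperBound.
Variables (R : realType) (S : finType) (P : S -> S -> R) (pi : S -> R).
Hypotheses (HP : stochastic P) (Hpi : stationary P pi).

Lemma Pow_set_ge_mass L y (B : {set S}) :
  mass pi B - dist_t P pi L <= Pow_set P L y B.
Proof.
have := tv_ge_sum_set B (proj1 (proj2 Hpi)) (Pow_sum1 HP L y).
rewrite tv_sym sumrB /mass => le_tv; have := le_dist P pi L y.
rewrite /Pow_set; lra.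
Qed.

(* Every [L.+1] steps the target is hit with probability at least [alpha / 2]. *)
Lemma exp_hit_le_of_dist (alpha : R) L x A :
  0 < alpha -> alpha <= 1 -> dist_t P pi L <= alpha / 2 ->
  (forall t, alpha <= mass pi (A t)) ->
  (exp_hit P x A <= (L.+1%:R / (alpha / 2))%:E)%E.
Proof.
move=> a0 a1 dL massA.
have step n : surv P x A (n + L.+1) <= (1 - alpha / 2) * surv P x A n.
  rewrite addnS; apply: le_trans (surv_step HP x A n L) _.
  rewrite /surv mulr_sumr; apply: ler_sum => y _.
  rewrite mulrC ler_wpM2r ?avoid_ge0 //.
  by have := Pow_set_ge_mass L y (A (n + L)%N); have := massA (n + L)%N; lra.
have g0 : 0 <= 1 - alpha / 2 by lra.
have sum_le := sum_geometric_decay (surv_ge0 HP x A) (surv_le1 HP x A) g0 step.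
rewrite (_ : 1 - (1 - alpha / 2) = alpha / 2) in sum_le; last by ring.
apply: exp_hit_le => // N; rewrite ler_pdivlMr; last by lra.
rewrite mulrC.
apply: le_trans (sum_le N); apply: ler_wpM2l; first by lra.
by apply: ler_sum => r _; rewrite surv_mono.
Qed.

Lemma exp_hit_le0 x (A : nat -> {set S}) : x \in A 0%N -> (exp_hit P x A <= 0%:E)%E.
Proof.
move=> xA; have surv1 : surv P x A 1 = 0.
  by rewrite survS_notin //= big1 // => y yA; case: eqP => // y_eq; rewrite y_eq xA in yA.
apply: exp_hit_le => // N; rewrite big1 // => r _.
by apply/eqP; rewrite eq_le surv_ge0 // andbT -surv1 surv_mono.
Qed.

End HittingUpperBound.

Section OptionalStopping.
Variables (R : realType) (S : finType) (P : S -> S -> R).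
Hypothesis HP : stochastic P.
Variables (t : nat) (B : {set S}) (x : S) (A : nat -> {set S}).
Local Notation avoid := (avoid P x A).

(* [s |-> Pow_set P (t - s) X_s B] is a martingale up to time [t]; stop it at [tau_A]. *)
Lemma optional_stopping s : (s <= t)%N ->
  \sum_y avoid s y * Pow_set P (t - s) y B
  + \sum_(r < s) \sum_(y in A r) avoid r y * Pow_set P (t - r) y B = Pow_set P t x B.
Proof.
elim: s => [|s IH] st.
  rewrite big_ord0 addr0 subn0 /= (bigD1 x) //= eqxx mul1r big1 ?addr0 //.
  by move=> y /negbTE ->; rewrite mul0r.
rewrite -IH ?(ltnW st) // big_ord_recr /= [X in _ + X]addrC addrA; congr (_ + _).
have -> : \sum_y avoid s.+1 y * Pow_set P (t - s.+1) y B =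
    \sum_(z | z \notin A s) avoid s z * Pow_set P (t - s) z B.
  rewrite /=; under eq_bigr do rewrite mulr_suml.
  rewrite exchange_big /= [in RHS]big_mkcond /=; apply: eq_bigr => z _.
  rewrite -(subnSK st) Pow_setSl mulr_sumr.
  case: (z \notin A s); rewrite ?mul1r ?mul0r; last by rewrite big1 // => y _; rewrite !mul0r.
  by apply: eq_bigr => y _; rewrite mulrA.
by rewrite [in RHS](bigID (mem (A s))) /= addrC.
Qed.

Lemma hit_before_le (h : R) : 0 <= h ->
  (forall r y, y \in A r -> h <= Pow_set P (t - r) y B) ->
  h * (1 - surv P x A t.+1) <= Pow_set P t x B.
Proof.
move=> h0 hA.
have hit_le r : h * hit_prob P x A r <= \sum_(y in A r) avoid r y * Pow_set P (t - r) y B.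
  rewrite /hit_prob mulr_sumr; apply: ler_sum => y yA.
  by rewrite mulrC ler_wpM2l ?avoid_ge0 ?hA.
rewrite -(sum_hit_prob HP x A t.+1) -(optional_stopping (leqnn t)) big_ord_recr /=.
rewrite mulrDr mulr_sumr addrC lerD //; last by apply: ler_sum => r _; apply: hit_le.
apply: le_trans (hit_le t) _; rewrite [X in _ <= X](bigID (mem (A t))) /= lerDl.
by apply: sumr_ge0 => y _; rewrite mulr_ge0 ?avoid_ge0 ?Pow_set_ge0.
Qed.

End OptionalStopping.

Lemma mass_level_set_ge (R : realType) (S : finType) (P : S -> S -> R) (pi : S -> R)
    (n : nat) (B : {set S}) (alpha h : R) :
  stochastic P -> stationary P pi ->
  h < 1 -> 1 - mass pi B <= (1 - alpha) * (1 - h) ->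
  alpha <= mass pi [set y | h <= Pow_set P n y B].
Proof.
move=> HP Hpi h1 massB; have [pi0 [pi1 _]] := Hpi.
set C := [set y | h <= Pow_set P n y B].
have massC : mass pi C + \sum_(y | y \notin C) pi y = 1 by rewrite /mass -pi1 [RHS](bigID (mem C)).
(* Markov's inequality for [1 - Pow_set P n _ B], whose [pi]-mean is [1 - mass pi B]. *)
have markov : (1 - h) * \sum_(y | y \notin C) pi y <= 1 - mass pi B.
  rewrite -(stationary_Pow_set Hpi n B) -[X in _ <= X - _]pi1 -sumrB mulr_sumr.
  rewrite [X in _ <= X](bigID (mem C)) /= -[X in X <= _]add0r lerD //.
    by apply: sumr_ge0 => y _; rewrite subr_ge0 ler_piMr ?Pow_set_le1.
  apply: ler_sum => y; rewrite inE -ltNge => hy.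
  by rewrite -[X in _ <= X - _]mulr1 -mulrBr mulrC ler_wpM2l // lerB // ltW.
have : (1 - h) * \sum_(y | y \notin C) pi y <= (1 - h) * (1 - alpha).
  by apply: le_trans markov _; rewrite mulrC.
rewrite ler_pM2l ?subr_gt0 //; lra.
Qed.

(* [gam a] lies strictly between [a] and [1/2]; [eta a] is the margin that
   makes the level sets used in [tmov_ge_of_dist] have mass at least [a]. *)
Definition gam (R : realType) (a : R) : R := (2 * a + 1) / 4.
Definition eta (R : realType) (a : R) : R := (gam a - a) / (1 - a).

Lemma gam_eta_bounds (R : realType) (a : R) : 0 < a -> a < 2^-1 ->
  [/\ 0 < eta a, eta a * (1 - a) = gam a - a, a < gam a & gam a < 2^-1].
Proof.
move=> a0 a1; have a1' : 0 < 1 - a by lra.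
rewrite /eta /gam; split; try lra.
- by apply: divr_gt0 => //; lra.
- by rewrite divfK // gt_eqF.
Qed.

Section MovingTargets.
Variables (R : realType) (S : finType) (P : S -> S -> R) (pi : S -> R).
Hypotheses (HP : stochastic P) (Hpi : stationary P pi).

Lemma mass_le1 (B : {set S}) : mass pi B <= 1.
Proof.
have [pi0 [pi1 _]] := Hpi.
by rewrite -pi1 /mass [X in _ <= X](bigID (mem B)) /= lerDl sumr_ge0.
Qed.

Lemma exp_hit_le_tmov alpha x A : (forall r, alpha <= mass pi (A r)) ->
  (exp_hit P x A <= tmov P pi alpha)%E.
Proof. by move=> massA; apply: ereal_sup_ubound; exists x, A. Qed.

Lemma tmov_ge0 alpha : alpha <= 1 -> (0 <= tmov P pi alpha)%E.
Proof.
have [pi0 [pi1 _]] := Hpi; move=> a1.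
have [x _] : exists x : S, true.
  case: (pickP (fun _ : S => true)) => [x _|S0]; first by exists x.
  by move: pi1; rewrite big_pred0 // => /eqP; rewrite eq_sym oner_eq0.
have massT (r : nat) : alpha <= mass pi [set: S].
  by rewrite /mass (eq_bigl _ _ (fun y => finset.in_setT y)) pi1.
apply: le_trans _ (exp_hit_le_tmov (A := fun=> [set: S]) x massT).
by have := exp_hit_ge HP x (fun=> [set: S]) 0; rewrite mul0r.
Qed.

(* A state far from equilibrium at time [t] yields moving targets that the chain
   started there avoids until time [t] with probability at least [eta alpha / 2]. *)
Lemma tmov_ge_of_dist (alpha : R) t : 0 < alpha -> alpha < 2^-1 ->
  gam alpha < dist_t P pi t ->
  ((t.+1%:R * (eta alpha / 2))%:E <= tmov P pi alpha)%E.
Proof.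
move=> a0 a1 gam_lt; have [eta0 eta_eq a_lt_gam gam_lt_half] := gam_eta_bounds a0 a1.
have [x tv_gt] : exists x, gam alpha < tv (Pow P t x) pi.
  apply/not_existsP => tv_le; move: gam_lt; rewrite ltNge => /negP; apply.
  apply: bigmax_le => [|y _]; first by rewrite /gam; lra.
  by rewrite leNgt; apply/negP => /(tv_le y).
set B := [set y | Pow P t x y < pi y].
rewrite tv_sym tv_sum_gt ?(Pow_sum1 HP) ?(proj1 (proj2 Hpi)) // sumrB -/(mass pi B) in tv_gt.
have {}tv_gt : gam alpha < mass pi B - Pow_set P t x B := tv_gt.
set q := Pow_set P t x B in tv_gt *.
have q0 : 0 <= q := Pow_set_ge0 HP t x B.
set h := q + eta alpha / 2.
have mB1 := mass_le1 B.
have h1 : h < 1 by rewrite /h; nra.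
pose A r := [set y | h <= Pow_set P (t - r) y B].
have massA r : alpha <= mass pi (A r).
  apply: (mass_level_set_ge _ HP Hpi h1); move: h1; rewrite /h.
  by have := mulr_ge0 (ltW a0) q0; nra.
have hit_le : h * (1 - surv P x A t.+1) <= q.
  apply: hit_before_le => //; first by rewrite /h; lra.
  by move=> r y; rewrite inE.
have surv_ge : eta alpha / 2 <= surv P x A t.+1.
  have h_le1 : 0 <= 1 - h by rewrite subr_ge0 ltW.
  have := mulr_ge0 (surv_ge0 HP x A t.+1) h_le1.
  by rewrite /h in hit_le *; nra.
apply: le_trans _ (exp_hit_le_tmov x massA).
by apply: le_trans _ (exp_hit_ge HP x A t.+1); rewrite lee_fin ler_wpM2l.
Qed.

End MovingTargets.

Lemma exists_exprS_le (R : realType) (r e : R) : 0 <= r -> r < 1 -> 0 < e ->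
  exists k, r ^+ k.+1 <= e.
Proof.
move=> r0 r1 e0; have r_lt1 : `|r| < 1 by rewrite ger0_norm.
have /cvgr_dist_lt/(_ e e0)[N _ rN] := cvg_expr r_lt1.
exists N; have := rN N.+1 (leqnSn N).
by rewrite sub0r normrN ger0_norm ?exprn_ge0 // => /ltW.
Qed.

Section MixingVersusMovingTargets.
Variables (R : realType) (S : finType) (P : S -> S -> R) (pi : S -> R).
Hypotheses (HP : stochastic P) (Hpi : stationary P pi).
Variable alpha : R.
Hypotheses (alpha_gt0 : 0 < alpha) (alpha_lt_half : alpha < 2^-1).

Lemma tmov_le_of_dist L : dist_t P pi L <= alpha / 2 ->
  (tmov P pi alpha <= (L.+1%:R / (alpha / 2))%:E)%E.
Proof.
move=> dL; apply: ge_ereal_sup => _ [x [A [massA ->]]].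
by apply: (exp_hit_le_of_dist HP Hpi) => //; have := alpha_lt_half; lra.
Qed.

(* At time 0 the chain sits at its starting point, which then lies in every
   target of mass [alpha > dist_t P pi 0 = 0]. *)
Lemma tmov_le0_of_dist0 : dist_t P pi 0 <= 4^-1 -> (tmov P pi alpha <= 0%:E)%E.
Proof.
move=> /(dist0_eq0 HP Hpi) d0; apply: ge_ereal_sup => _ [x [A [massA ->]]].
apply: (exp_hit_le0 HP); apply: contraT => xA.
have := Pow_set_ge_mass HP Hpi 0 x (A 0%N); rewrite d0 subr0 /Pow_set big1.
  by have := massA 0%N; have := alpha_gt0; lra.
by move=> y yA /=; case: eqP => // x_eq; rewrite x_eq yA in xA.
Qed.

Lemma tmov_le_tmix k : (2^-1) ^+ k.+1 <= alpha / 2 ->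
  (((alpha / 2) / k.+2%:R)%:E * tmov P pi alpha <= tmix P pi)%E.
Proof.
move=> half_k; have a0 := alpha_gt0.
have c0 : 0 <= (alpha / 2) / k.+2%:R by rewrite divr_ge0 //; lra.
apply: le_ereal_inf_tmp => _ [[|t] /= dt <-].
  apply: le_trans (lee_wpmul2l _ (tmov_le0_of_dist0 dt)) _; first by rewrite lee_fin.
  by rewrite mule0.
have dL : dist_t P pi (k.+1 * t.+1) <= alpha / 2.
  apply: le_trans (dist_mul_le_exp HP Hpi _ _) (le_trans _ half_k).
  by rewrite lerXn2r ?nnegrE ?mulr_ge0 ?dist_ge0 ?dt //; lra.
apply: le_trans (lee_wpmul2l _ (tmov_le_of_dist dL)) _; first by rewrite lee_fin.
rewrite -EFinM lee_fin mulrC mulrA divfK ?gt_eqF //; last by lra.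
by rewrite ler_pdivrMr ?ltr0n // -natrM ler_nat; lia.
Qed.

(* With [tmov P pi alpha = r], [tmov_ge_of_dist] gives [dist_t P pi t <= gam alpha]
   for [t := truncn (r / (eta alpha / 2))]; iterating brings the distance below [1/4]. *)
Lemma tmix_le_tmov k : (2 * gam alpha) ^+ k.+1 <= 4^-1 ->
  (tmix P pi <= (k.+1%:R / (eta alpha / 2))%:E * tmov P pi alpha)%E.
Proof.
move=> gam_k; have [eta0 _ _ gam_lt_half] := gam_eta_bounds alpha_gt0 alpha_lt_half.
have d0 : 0 < eta alpha / 2 by lra.
have a1 : alpha <= 1 by have := alpha_lt_half; lra.
have := tmov_ge0 HP Hpi a1.
case E : (tmov P pi alpha) => [r| |] //= r0; last by rewrite gt0_muley ?leey // lte_fin divr_gt0.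
rewrite lee_fin in r0; set t := Num.truncn (r / (eta alpha / 2)).
have dt : dist_t P pi t <= gam alpha.
  rewrite leNgt; apply/negP => /(tmov_ge_of_dist HP Hpi alpha_gt0 alpha_lt_half).
  rewrite E lee_fin; have := truncnS_gt (r / (eta alpha / 2)).
  by rewrite -/t ltr_pdivrMr //; lra.
apply: (@le_trans _ _ (k.+1 * t)%:R%:E).
  apply: ereal_inf_lbound; exists (k.+1 * t)%N => //=.
  apply: le_trans (dist_mul_le_exp HP Hpi _ _) (le_trans _ gam_k).
  have gam0 : 0 <= gam alpha by rewrite /gam; have := alpha_gt0; lra.
  by rewrite lerXn2r ?nnegrE ?ler_pM2l // mulr_ge0 // dist_ge0.
rewrite -EFinM lee_fin natrM mulrAC -mulrA ler_wpM2l //.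
by rewrite /t truncn_le divr_ge0 // ltW.
Qed.

End MixingVersusMovingTargets.

Theorem theorem1p1 (R : realType) (alpha : R) :
  0 < alpha -> alpha < 2^-1 ->
  exists c C : R, 0 < c /\ 0 < C /\
    forall (S : finType) (P : S -> S -> R) (pi : S -> R),
      stochastic P -> irreducible P -> stationary P pi ->
      (c%:E * tmov P pi alpha <= tmix P pi)%E /\
      (tmix P pi <= C%:E * tmov P pi alpha)%E.
Proof.
move=> a0 a1; have [eta0 _ _ gam_lt_half] := gam_eta_bounds a0 a1.
have [kL half_kL] := @exists_exprS_le R (2^-1) (alpha / 2) ltac:(lra) ltac:(lra) ltac:(lra).
have [kU gam_kU] := @exists_exprS_le R (2 * gam alpha) (4^-1)
  ltac:(rewrite /gam; lra) ltac:(lra) ltac:(lra).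
exists ((alpha / 2) / kL.+2%:R), (kU.+1%:R / (eta alpha / 2)).
split; first by rewrite divr_gt0 //; lra.
split; first by rewrite divr_gt0 //; lra.
move=> S P pi HP _ Hpi.
by split; [apply: tmov_le_tmix | apply: tmix_le_tmov].
Qed.
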